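(* Let $\zeta\in(0,1]$, $\beta\ge0$, $\lambda\ge0$, $p\in(0,1]$, and integers $\tau_n\ge1$, $D_n\ge1$. Define $V(1,\tau)=\beta$ for $0\le\tau<\tau_n$ and $V(1,\tau)=p\beta$ for $\tau_n\le\tau<\tau_n+D_n$, and define $V(0,\tau)$ for $0\le\tau\le\tau_n+D_n$ by $V(0,0)=0$, $$V(0,\tau)=\max\big\{V(0,\tau-1),\,-\lambda+\zeta V(1,\tau-1)+(1-\zeta)V(0,\tau-1)\big\}\quad (1\le\tau\le\tau_n+D_n,\ \tau\ne\tau_n+1),$$ $$V(0,\tau_n+1)=\max\big\{pV(0,\tau_n),\,-\lambda+\zeta V(1,\tau_n)+(1-\zeta)pV(0,\tau_n)\big\}.$$ (A) Suppose $\zeta\beta>\lambda$ and set $c=\dfrac{\lambda}{(\zeta\beta-\lambda)(1-\zeta)^{\tau_n}+\lambda}$. (i) If $p>c$, then for all $1\le w\le D_n$, $$V(0,\tau_n+w)=-(1-p)\frac{1-(1-\zeta)^{w}}{\zeta}\lambda+p\,\frac{1-(1-\zeta)^{\tau_n+w}}{\zeta}(\zeta\beta-\lambda),$$ and for each such $w$ the maximum defining $V(0,\tau_n+w)$ is attained by the second (''transmit'') option. (ii) If $p\le c$, then for all $1\le w\le D_n$, $V(0,\tau_n+w)=p\,\frac{1-(1-\zeta)^{\tau_n}}{\zeta}(\zeta\beta-\lambda)$; if moreover $p<c$, then for each such $w$ the second option is strictly smaller than the first (''do not transmit'') option. (B) If $\zeta\beta\le\lambda$, then $V(0,\tau_n+w)=0$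 for all $1\le w\le D_n$, and if $\zeta\beta<\lambda$ the second option is strictly smaller than the first at every $\tau\in\{1,\dots,\tau_n+D_n\}$.
   Context: This is the single-packet dynamic program for a predicted arrival of a user under imperfect prediction, with static channel (success probability $\zeta$ per transmission) and binary resource levels $\{0,1\}$. A predicted packet enters the prediction window $D_n$ slots before its actual arrival and has deadline $\tau_n$ after arrival; $\tau$ is the number of slots remaining until the deadline (so $\tau>\tau_n$ means the packet is still only predicted). Each prediction is correct with probability $p$ (true-positive rate), which is revealed when the packet's arrival time comes; $\beta$ is the delivery reward and $\lambda$ the cost per transmission. In each max, the first option is not transmitting and the second is transmitting. *)

From Stdlib Require Import Reals Arith.
Open Scope R_scope.

Definition V1 (beta p : R) (taun : nat) (tau : nat) : R :=
  if Nat.ltb tau taun then beta else p * beta.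

(* The "continuation" value of V(0, t) as it enters the step to tau = t+1:
   at tau = taun+1 (i.e. t = taun) the prediction is resolved and the
   value is multiplied by p. *)
Definition wait_val (p : R) (taun : nat) (t : nat) (v : R) : R :=
  if Nat.eqb t taun then p * v else v.

Definition tx_val (zeta beta lambda p : R) (taun : nat) (t : nat) (v : R) : R :=
  - lambda + zeta * V1 beta p taun t + (1 - zeta) * wait_val p taun t v.

Fixpoint V0 (zeta beta lambda p : R) (taun : nat) (tau : nat) : R :=
  match tau with
  | O => 0
  | S t => Rmax (wait_val p taun t (V0 zeta beta lambda p taun t))
                (tx_val zeta beta lambda p taun t (V0 zeta beta lambda p taun t))
  end.

(* The two options in the max defining V(0,tau), for tau >= 1:
   first = not transmitting, second = transmitting. *)
Definition wait_opt (zeta beta lambda p : R) (taun : nat) (tau : nat) : R :=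
  wait_val p taun (pred tau) (V0 zeta beta lambda p taun (pred tau)).

Definition tx_opt (zeta beta lambda p : R) (taun : nat) (tau : nat) : R :=
  tx_val zeta beta lambda p taun (pred tau) (V0 zeta beta lambda p taun (pred tau)).

(** Both phases of the recursion iterate [x |-> max (x, r + (1 - zeta) x)]:
    with [r = zeta beta - lambda] before the predicted arrival, and with
    [r = zeta p beta - lambda] afterwards, starting from [p V(0, taun)].  Along
    such an iteration the gain of transmitting, [r - zeta x], is multiplied by
    [1 - zeta] as long as it is nonnegative and stays frozen once it is
    nonpositive, which yields the closed forms.  The first phase starts with
    gain [zeta beta - lambda], the second with gain
    [p ((zeta beta - lambda) (1 - zeta)^taun + lambda) - lambda], whose sign is
    that of [p - c]. *)

From Stdlib Require Import Reals Arith Lra Lia Psatz.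
Open Scope R_scope.

Definition step (zeta r x : R) : R := Rmax x (r + (1 - zeta) * x).

Section CappedIteration.

Variables zeta r : R.
Hypothesis Hzeta : 0 < zeta <= 1.

Local Notation iter k x := (Nat.iter k (step zeta r) x).

Lemma step_eq_gain x : step zeta r x = x + Rmax 0 (r - zeta * x).
Proof.
  unfold step; destruct (Rle_dec 0 (r - zeta * x)).
  - rewrite !Rmax_right; lra.
  - rewrite !Rmax_left; lra.
Qed.

Lemma iter_step_gain x0 : 0 <= r - zeta * x0 ->
  forall k, r - zeta * iter k x0 = (1 - zeta) ^ k * (r - zeta * x0).
Proof.
  intros Hg k; induction k as [|k IH]; [simpl; ring|].
  assert (Hk : 0 <= (1 - zeta) ^ k * (r - zeta * x0))
    by (apply Rmult_le_pos; [apply pow_le; lra | exact Hg]).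
  rewrite Nat.iter_succ, step_eq_gain, IH, Rmax_right by exact Hk.
  rewrite <- tech_pow_Rmult; lra.
Qed.

Lemma iter_step_closed x0 : 0 <= r - zeta * x0 ->
  forall k, iter k x0 = x0 + (1 - (1 - zeta) ^ k) / zeta * (r - zeta * x0).
Proof.
  intros Hg k; induction k as [|k IH]; [simpl; field; lra|].
  assert (Hk : 0 <= (1 - zeta) ^ k * (r - zeta * x0))
    by (apply Rmult_le_pos; [apply pow_le; lra | exact Hg]).
  rewrite Nat.iter_succ, step_eq_gain, iter_step_gain, Rmax_right, IH
    by assumption.
  rewrite <- tech_pow_Rmult; field; lra.
Qed.

Lemma iter_step_fixed x0 : r - zeta * x0 <= 0 -> forall k, iter k x0 = x0.
Proof.
  intros Hg k; induction k as [|k IH]; [reflexivity|].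
  rewrite Nat.iter_succ, IH, step_eq_gain, Rmax_left by exact Hg; ring.
Qed.

End CappedIteration.

Lemma le_mul_of_div_lt l s p : 0 <= l <= s -> l / s < p -> l <= p * s.
Proof.
  intros Hls Hp; destruct (Req_dec s 0) as [->|Hs]; [lra|].
  apply Rmult_lt_compat_r with (r := s) in Hp; [|lra].
  unfold Rdiv in Hp; rewrite Rmult_assoc, Rinv_l, Rmult_1_r in Hp; lra.
Qed.

Lemma mul_le_of_le_div l s p : 0 <= l <= s -> p <= l / s -> p * s <= l.
Proof.
  intros Hls Hp; destruct (Req_dec s 0) as [->|Hs]; [lra|].
  apply Rmult_le_compat_r with (r := s) in Hp; [|lra].
  unfold Rdiv in Hp; rewrite Rmult_assoc, Rinv_l, Rmult_1_r in Hp; lra.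
Qed.

Lemma mul_lt_of_lt_div l s p : 0 <= s -> 0 < p -> p < l / s -> p * s < l.
Proof.
  intros Hs0 Hp0 Hp; destruct (Req_dec s 0) as [->|Hs].
  - unfold Rdiv in Hp; rewrite Rinv_0 in Hp; lra.
  - apply Rmult_lt_compat_r with (r := s) in Hp; [|lra].
    unfold Rdiv in Hp; rewrite Rmult_assoc, Rinv_l, Rmult_1_r in Hp; lra.
Qed.

Section PredictedPacket.

Variables zeta beta lambda p : R.
Variable taun : nat.
Hypothesis Hzeta : 0 < zeta <= 1.

Local Notation V := (V0 zeta beta lambda p taun).
Local Notation wait := (wait_opt zeta beta lambda p taun).
Local Notation tx := (tx_opt zeta beta lambda p taun).
Local Notation r_pre := (zeta * beta - lambda).
Local Notation r_post := (zeta * (p * beta) - lambda).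
Local Notation iter_pre k x := (Nat.iter k (step zeta r_pre) x).
Local Notation iter_post k x := (Nat.iter k (step zeta r_post) x).

Lemma V0_succ_opt t : V (S t) = Rmax (wait (S t)) (tx (S t)).
Proof. reflexivity. Qed.

Lemma V0_succ_before t : (t < taun)%nat -> V (S t) = step zeta r_pre (V t).
Proof.
  intros Ht; cbn [V0]; unfold step, tx_val, wait_val, V1.
  rewrite (proj2 (Nat.ltb_lt t taun) Ht), (proj2 (Nat.eqb_neq t taun)) by lia.
  f_equal; ring.
Qed.

Lemma V0_succ_taun : V (S taun) = step zeta r_post (p * V taun).
Proof.
  cbn [V0]; unfold step, tx_val, wait_val, V1.
  rewrite Nat.eqb_refl, Nat.ltb_irrefl; f_equal; ring.
Qed.

Lemma V0_succ_after t : (taun < t)%nat -> V (S t) = step zeta r_post (V t).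
Proof.
  intros Ht; cbn [V0]; unfold step, tx_val, wait_val, V1.
  rewrite (proj2 (Nat.ltb_ge t taun)), (proj2 (Nat.eqb_neq t taun)) by lia.
  f_equal; ring.
Qed.

Lemma tx_opt_after t : (taun <= t)%nat -> tx (S t) = r_post + (1 - zeta) * wait (S t).
Proof.
  intros Ht; unfold tx_opt, wait_opt, tx_val, V1; cbn [pred].
  rewrite (proj2 (Nat.ltb_ge t taun)) by lia; ring.
Qed.

Lemma V0_before t : (t <= taun)%nat -> V t = iter_pre t 0.
Proof.
  induction t as [|t IH]; intros Ht; [reflexivity|].
  rewrite V0_succ_before, IH, Nat.iter_succ by lia; reflexivity.
Qed.

Lemma V0_after k : V (taun + S k) = iter_post (S k) (p * V taun).
Proof.
  induction k as [|k IH].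
  - rewrite Nat.add_1_r; exact V0_succ_taun.
  - rewrite Nat.add_succ_r, V0_succ_after, IH by lia; reflexivity.
Qed.

Lemma wait_opt_after k : wait (taun + S k) = iter_post k (p * V taun).
Proof.
  unfold wait_opt; rewrite Nat.add_succ_r; cbn [pred]; unfold wait_val.
  destruct k as [|k].
  - rewrite Nat.add_0_r, Nat.eqb_refl; reflexivity.
  - rewrite (proj2 (Nat.eqb_neq _ taun)) by lia; apply V0_after.
Qed.

Lemma tx_sub_wait_after k :
  tx (taun + S k) - wait (taun + S k) = r_post - zeta * iter_post k (p * V taun).
Proof.
  rewrite Nat.add_succ_r, tx_opt_after, <- Nat.add_succ_r, wait_opt_after by lia.
  ring.
Qed.

Lemma V0_taun : 0 <= r_pre ->
  V taun = (1 - (1 - zeta) ^ taun) / zeta * r_pre.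
Proof.
  intros Ha; rewrite V0_before, iter_step_closed by (auto; lra); ring.
Qed.

Lemma post_gain : 0 <= r_pre ->
  r_post - zeta * (p * V taun)
  = p * (r_pre * (1 - zeta) ^ taun + lambda) - lambda.
Proof. intros Ha; rewrite V0_taun by exact Ha; field; lra. Qed.

Lemma V0_after_transmit : 0 <= r_pre ->
  lambda <= p * (r_pre * (1 - zeta) ^ taun + lambda) ->
  forall w, (1 <= w)%nat ->
    V (taun + w) = - (1 - p) * ((1 - (1 - zeta) ^ w) / zeta) * lambda
                   + p * ((1 - (1 - zeta) ^ (taun + w)) / zeta) * r_pre
    /\ V (taun + w) = tx (taun + w).
Proof.
  intros Ha HK w Hw; destruct w as [|k]; [lia|].
  assert (Hg : 0 <= r_post - zeta * (p * V taun)) by (rewrite post_gain; lra).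
  split.
  - rewrite V0_after, iter_step_closed, post_gain, V0_taun, pow_add by auto.
    field; lra.
  - rewrite Nat.add_succ_r, V0_succ_opt, <- Nat.add_succ_r; apply Rmax_right.
    assert (0 <= (1 - zeta) ^ k) by (apply pow_le; lra).
    pose proof (tx_sub_wait_after k) as Hd.
    rewrite iter_step_gain in Hd by auto; nra.
Qed.

Lemma V0_after_idle : 0 <= r_pre ->
  p * (r_pre * (1 - zeta) ^ taun + lambda) <= lambda ->
  forall w, (1 <= w)%nat ->
    V (taun + w) = p * ((1 - (1 - zeta) ^ taun) / zeta) * r_pre.
Proof.
  intros Ha HK w Hw; destruct w as [|k]; [lia|].
  assert (Hg : r_post - zeta * (p * V taun) <= 0) by (rewrite post_gain; lra).
  rewrite V0_after, iter_step_fixed, V0_taun by auto; ring.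
Qed.

Lemma tx_opt_lt_wait_opt_after : 0 <= r_pre ->
  p * (r_pre * (1 - zeta) ^ taun + lambda) < lambda ->
  forall w, (1 <= w)%nat -> tx (taun + w) < wait (taun + w).
Proof.
  intros Ha HK w Hw; destruct w as [|k]; [lia|].
  assert (Hg : r_post - zeta * (p * V taun) <= 0) by (rewrite post_gain; lra).
  pose proof (tx_sub_wait_after k) as Hd.
  rewrite iter_step_fixed, post_gain in Hd by auto; lra.
Qed.

Hypothesis Hbeta : 0 <= beta.
Hypothesis Hp : p <= 1.

Lemma wait_val_zero t : wait_val p taun t 0 = 0.
Proof. unfold wait_val; destruct (Nat.eqb t taun); ring. Qed.

Lemma tx_val_zero_le t : tx_val zeta beta lambda p taun t 0 <= r_pre.
Proof.
  unfold tx_val; rewrite wait_val_zero; unfold V1.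
  assert (p * beta <= beta) by nra.
  destruct (Nat.ltb t taun); nra.
Qed.

Lemma V0_zero : r_pre <= 0 -> forall t, V t = 0.
Proof.
  intros Ha t; induction t as [|t IH]; [reflexivity|].
  cbn [V0]; rewrite IH, wait_val_zero; apply Rmax_left.
  pose proof (tx_val_zero_le t); lra.
Qed.

Lemma tx_opt_lt_wait_opt : r_pre < 0 -> forall t, tx (S t) < wait (S t).
Proof.
  intros Ha t; unfold tx_opt, wait_opt; cbn [pred].
  rewrite V0_zero, wait_val_zero by lra.
  pose proof (tx_val_zero_le t); lra.
Qed.

End PredictedPacket.

Theorem theorem3 (zeta beta lambda p : R) (taun Dn : nat) :
  0 < zeta <= 1 -> 0 <= beta -> 0 <= lambda -> 0 < p <= 1 ->
  (1 <= taun)%nat -> (1 <= Dn)%nat ->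
  (zeta * beta > lambda ->
     let c := lambda / ((zeta * beta - lambda) * (1 - zeta) ^ taun + lambda) in
     (p > c ->
        forall w : nat, (1 <= w <= Dn)%nat ->
          V0 zeta beta lambda p taun (taun + w) =
            - (1 - p) * ((1 - (1 - zeta) ^ w) / zeta) * lambda
            + p * ((1 - (1 - zeta) ^ (taun + w)) / zeta) * (zeta * beta - lambda)
          /\ V0 zeta beta lambda p taun (taun + w) =
               tx_opt zeta beta lambda p taun (taun + w)) /\
     (p <= c ->
        (forall w : nat, (1 <= w <= Dn)%nat ->
          V0 zeta beta lambda p taun (taun + w) =
            p * ((1 - (1 - zeta) ^ taun) / zeta) * (zeta * beta - lambda)) /\
        (p < c ->
          forall w : nat, (1 <= w <= Dn)%nat ->
            tx_opt zeta beta lambda p taun (taun + w)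
              < wait_opt zeta beta lambda p taun (taun + w)))) /\
  (zeta * beta <= lambda ->
     (forall w : nat, (1 <= w <= Dn)%nat ->
        V0 zeta beta lambda p taun (taun + w) = 0) /\
     (zeta * beta < lambda ->
        forall tau : nat, (1 <= tau <= taun + Dn)%nat ->
          tx_opt zeta beta lambda p taun tau
            < wait_opt zeta beta lambda p taun tau)).
Proof.
  intros Hzeta Hbeta Hlambda Hp _ _; split.
  - intros Ha c.
    assert (Hs : 0 <= lambda <= (zeta * beta - lambda) * (1 - zeta) ^ taun + lambda).
    { assert (0 <= (1 - zeta) ^ taun) by (apply pow_le; lra); nra. }
    split.
    + intros Hc w Hw; apply V0_after_transmit; [lra | lra | | lia].
      apply le_mul_of_div_lt; assumption.
    + intros Hc; split.
      * intros w Hw; apply V0_after_idle; [lra | lra | | lia].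
        apply mul_le_of_le_div; assumption.
      * intros Hc' w Hw; apply tx_opt_lt_wait_opt_after; [lra | lra | | lia].
        apply mul_lt_of_lt_div; [lra | lra | exact Hc'].
  - intros Ha; split.
    + intros w _; apply V0_zero; lra.
    + intros Hlt [|t] Ht; [lia|]; apply tx_opt_lt_wait_opt; lra.
Qed.
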